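(* Let $Z$ be an abelian group, $K$ a group, and $\theta,\mu:K\times K\to Z$ loop cocycles such that $\nu(x,y)=\theta(x,y)\mu(x,y)^{-1}$ is a group cocycle. Then the left inner mappings of $K\ltimes_\theta Z$ and $K\ltimes_\mu Z$ coincide: for all $u,v,w\in K\times Z$, the element $(uv)\backslash(u(vw))$ computed in $K\ltimes_\theta Z$ equals the one computed in $K\ltimes_\mu Z$.
   Context: A loop cocycle is a map $\theta:K\times K\to Z$ with $\theta(x,1)=\theta(1,x)=1$ for all $x\in K$. It is a group cocycle if moreover $\theta(x,y)\theta(xy,z)=\theta(y,z)\theta(x,yz)$ for all $x,y,z\in K$. For a loop cocycle $\theta$, $K\ltimes_\theta Z$ is the loop on $K\times Z$ with multiplication $(x,a)(y,b)=(xy,\,ab\,\theta(x,y))$; $u\backslash w$ denotes the unique $z$ with $uz=w$. *)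

(* Z is an abelian group, written additively (zmodType);
   K is an arbitrary (possibly infinite) group given by its carrier and operations. *)
From HB Require Import structures.
From mathcomp Require Import all_boot all_order all_algebra.
Set Implicit Arguments. Unset Strict Implicit. Unset Printing Implicit Defensive.
Import GRing.Theory.
Local Open Scope ring_scope.

Record is_group (K : Type) (mul : K -> K -> K) (one : K) (inv : K -> K) : Prop := {
  grp_assoc : forall x y z, mul x (mul y z) = mul (mul x y) z;
  grp_mul1 : forall x, mul one x = x;
  grp_mulr1 : forall x, mul x one = x;
  grp_mulV : forall x, mul (inv x) x = one;
  grp_mulVr : forall x, mul x (inv x) = one
}.

Definition loop_cocycle (K : Type) (Z : zmodType) (one : K) (theta : K -> K -> Z) : Prop :=
  forall x, theta x one = 0 /\ theta one x = 0.

Definition group_cocycle (K : Type) (Z : zmodType) (mul : K -> K -> K) (one : K)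
    (theta : K -> K -> Z) : Prop :=
  loop_cocycle one theta /\
  forall x y z, theta x y + theta (mul x y) z = theta y z + theta x (mul y z).

(* Multiplication of K ⋉_theta Z on K * Z:
   (x,a)(y,b) = (xy, ab theta(x,y)), additively a + b + theta x y. *)
Definition ext_mul (K : Type) (Z : zmodType) (mul : K -> K -> K) (theta : K -> K -> Z)
    (u v : K * Z) : K * Z :=
  (mul u.1 v.1, u.2 + v.2 + theta u.1 v.1).

From HB Require Import structures.
From mathcomp Require Import all_boot all_order all_algebra.
Set Implicit Arguments. Unset Strict Implicit.
Import GRing.Theory.
Local Open Scope ring_scope.

(* For a 2-cochain theta : K -> K -> Z write (additively)
     d theta (x, y, t) = theta(y,t) + theta(x,yt) - theta(x,y) - theta(xy,t)
   for its coboundary, the defect of the group cocycle identity.  When the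
   multiplication of K is associative, in K ⋉_theta Z with u = (x,a),
   v = (y,b), w = (t,c) one has
     (uv) (t, c + d theta (x,y,t)) = u (vw),
   i.e. the left inner mapping is w |-> (t, c + d theta (x,y,t)).
   The coboundary is additive in the cochain and vanishes on group cocycles,
   so d theta - d mu = d (theta - mu) = 0 and the same element solves the
   equation in both extensions. *)

Lemma subrACA (Z : zmodType) (x y z w : Z) : (x - y) - (z - w) = (x - z) - (y - w).
Proof. by rewrite !opprB addrACA [RHS]addrACA (addrC (- y)). Qed.

Section Coboundary.

Variables (Z : zmodType) (K : Type) (mul : K -> K -> K).

Definition coboundary (theta : K -> K -> Z) (x y t : K) : Z :=
  theta y t + theta x (mul y t) - theta x y - theta (mul x y) t.

Lemma coboundaryB (theta mu : K -> K -> Z) (x y t : K) :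
  coboundary (fun x y => theta x y - mu x y) x y t
    = coboundary theta x y t - coboundary mu x y t.
Proof.
rewrite /coboundary /= [RHS](subrACA (_ + _ - _)) (subrACA (theta y t + _)).
by rewrite (opprD (mu y t)) addrACA.
Qed.

Lemma coboundary_cocycle (nu : K -> K -> Z) :
  (forall x y t, nu x y + nu (mul x y) t = nu y t + nu x (mul y t)) ->
  forall x y t, coboundary nu x y t = 0.
Proof. by move=> nu_cocycle x y t; rewrite /coboundary -addrA -opprD nu_cocycle subrr. Qed.

Lemma coboundary_cohomologous (theta mu : K -> K -> Z) :
  (forall x y t, (theta x y - mu x y) + (theta (mul x y) t - mu (mul x y) t)
                 = (theta y t - mu y t) + (theta x (mul y t) - mu x (mul y t))) ->
  forall x y t, coboundary theta x y t = coboundary mu x y t.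
Proof.
move=> nu_cocycle x y t; apply/eqP; rewrite -subr_eq0 -coboundaryB.
by rewrite (@coboundary_cocycle (fun x y => theta x y - mu x y) nu_cocycle).
Qed.

Hypothesis mulA : forall x y z, mul x (mul y z) = mul (mul x y) z.

Lemma ext_mul_left_inner (theta : K -> K -> Z) (u v w : K * Z) :
  ext_mul mul theta (ext_mul mul theta u v) (w.1, w.2 + coboundary theta u.1 v.1 w.1)
    = ext_mul mul theta u (ext_mul mul theta v w).
Proof.
case: u v w => [x a] [y b] [t c]; rewrite /ext_mul /coboundary /= mulA; congr pair.
(* theta(x,y) and theta(xy,t) cancel against the coboundary *)
rewrite (addrA c) (addrA _ (c + _)) subrK addrACA (addrC (theta x y)) subrK.
by rewrite !addrA.
Qed.

End Coboundary.

Theorem lemma4p10 (Z : zmodType) (K : Type) (mul : K -> K -> K) (one : K) (inv : K -> K)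
  (theta mu : K -> K -> Z) :
  is_group mul one inv ->
  loop_cocycle one theta ->
  loop_cocycle one mu ->
  group_cocycle mul one (fun x y => theta x y - mu x y) ->
  forall u v w : K * Z,
    exists z : K * Z,
      ext_mul mul theta (ext_mul mul theta u v) z
        = ext_mul mul theta u (ext_mul mul theta v w) /\
      ext_mul mul mu (ext_mul mul mu u v) z
        = ext_mul mul mu u (ext_mul mul mu v w).
Proof.
move=> K_group _ _ [_ nu_cocycle] u v w.
exists (w.1, w.2 + coboundary mul theta u.1 v.1 w.1); split.
  exact: ext_mul_left_inner (grp_assoc K_group) theta u v w.
rewrite (coboundary_cohomologous nu_cocycle).
exact: ext_mul_left_inner (grp_assoc K_group) mu u v w.
Qed.
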